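(* Let $d,n\ge 1$, let $\boldsymbol{a}_1,\ldots,\boldsymbol{a}_n\in\mathbf{R}^d$, let $w_1,\ldots,w_n>0$, fix $\varepsilon>0$ and $1\le p\le 2$. Define $\Phi(\boldsymbol{x})=\sum_{j=1}^n w_j\,(\lVert\boldsymbol{x}-\boldsymbol{a}_j\rVert^2+\varepsilon)^{p/2}$ and let $\boldsymbol{x}^\star$ be its unique global minimizer. Let $\boldsymbol{x}^{(0)}\in\mathbf{R}^d$ be arbitrary and define, for $t\ge 0$, $$\mu_j^{(t)}=w_j\,(\lVert\boldsymbol{x}^{(t)}-\boldsymbol{a}_j\rVert^2+\varepsilon)^{p/2-1},\qquad \boldsymbol{x}^{(t+1)}=\frac{\sum_j\mu_j^{(t)}\boldsymbol{a}_j}{\sum_j\mu_j^{(t)}}.$$ Then there exist a constant $\nu<1$ and $T\ge 0$ such that for all $t\ge T$, $$\Phi(\boldsymbol{x}^{(t+1)})-\Phi(\boldsymbol{x}^\star)\le\nu\big(\Phi(\boldsymbol{x}^{(t)})-\Phi(\boldsymbol{x}^\star)\big).$$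
   Context: $\lVert\cdot\rVert$ is the Euclidean norm on $\mathbf{R}^d$. *)

From HB Require Import structures.
From mathcomp Require Import all_boot all_order all_algebra.
From mathcomp Require Import all_classical all_reals all_analysis.
Set Implicit Arguments. Unset Strict Implicit. Unset Printing Implicit Defensive.
Import Order.TTheory GRing.Theory Num.Theory.
Local Open Scope ring_scope.

Definition enorm (R : realType) (d : nat) (x : 'rV[R]_d) : R :=
  Num.sqrt (\sum_(i < d) x ord0 i ^+ 2).

Definition Phi (R : realType) (d n : nat) (a : 'I_n -> 'rV[R]_d) (w : 'I_n -> R)
  (eps p : R) (x : 'rV[R]_d) : R :=
  \sum_(j < n) w j * (enorm (x - a j) ^+ 2 + eps) `^ (p / 2).

Definition mu (R : realType) (d n : nat) (a : 'I_n -> 'rV[R]_d) (w : 'I_n -> R)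
  (eps p : R) (x : 'rV[R]_d) (j : 'I_n) : R :=
  w j * (enorm (x - a j) ^+ 2 + eps) `^ (p / 2 - 1).

Definition irls_step (R : realType) (d n : nat) (a : 'I_n -> 'rV[R]_d) (w : 'I_n -> R)
  (eps p : R) (x : 'rV[R]_d) : 'rV[R]_d :=
  (\sum_(j < n) mu a w eps p x j)^-1 *: \sum_(j < n) (mu a w eps p x j *: a j).

Fixpoint irls_iter (R : realType) (d n : nat) (a : 'I_n -> 'rV[R]_d) (w : 'I_n -> R)
  (eps p : R) (x0 : 'rV[R]_d) (t : nat) : 'rV[R]_d :=
  match t with
  | 0 => x0
  | t'.+1 => irls_step a w eps p (irls_iter a w eps p x0 t')
  end.

From HB Require Import structures.
From mathcomp Require Import all_boot all_order all_algebra.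
From mathcomp Require Import all_classical all_reals all_analysis.
From mathcomp Require Import ring lra.
Import Order.TTheory GRing.Theory Num.Theory.
Local Open Scope ring_scope.

(* Write q = p/2 and S_j(x) = ||x - a_j||^2 + eps, so that Phi = sum_j w_j S_j^q and
   mu_j(x) = w_j S_j(x)^(q-1); put G = sum_j mu_j(x) <x - a_j, x⋆ - x>,
   M = sum_j mu_j(x) and D = ||x⋆ - x||^2.
   Concavity of s |-> s^q majorizes Phi by the weighted least-squares function
   Phi(x) + q sum_j mu_j(x) (S_j - S_j(x)), whose minimizer is the IRLS update x+;
   comparing with the point x + th (x⋆ - x) gives Phi(x+) <= Phi(x) + q (2 th G + th^2 M D).
   Conversely, Phi decreases along the iterates, so at all of them and at x⋆ every S_j
   is below one bound K; there u |-> (||u||^2 + eps)^q is strongly convex with modulus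
   c = q eps K^(q-2), whence Phi(x) + 2 q G + c (sum_j w_j) D <= Phi(x⋆).
   As M <= eps^(q-1) sum_j w_j, taking th = c / (c + q eps^(q-1)) combines the two
   bounds into Phi(x+) - Phi(x⋆) <= (1 - th) (Phi(x) - Phi(x⋆)). *)

Section power_tangents.
Context {R : realType}.
Implicit Types r s t e : R.

Lemma weighted_AMGM_powR r s t : 0 < r < 1 -> 0 <= s -> 0 <= t ->
  s `^ r * t `^ (1 - r) <= r * s + (1 - r) * t.
Proof.
move=> /andP[r0 r1] s0 t0.
have r1' : 0 < 1 - r by rewrite subr_gt0.
have := @conjugate_powR R (s `^ r) (t `^ (1 - r)) r^-1 (1 - r)^-1
  (powR_ge0 _ _) (powR_ge0 _ _).
rewrite !invr_gt0 !invrK r0 r1' addrC subrK => /(_ isT isT erefl).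
by rewrite -!powRrM !mulfV ?gt_eqF // !powRr1 // (mulrC s) (mulrC t).
Qed.

Lemma concave_powR_tangent r s t : 0 < r <= 1 -> 0 < s -> 0 <= t ->
  t `^ r <= s `^ r + r * s `^ (r - 1) * (t - s).
Proof.
move=> /andP[r0]; rewrite le_eqVlt => /predU1P[->|r1] s0 t0.
  by rewrite subrr powRr0 (powRr1 t0) (powRr1 (ltW s0)); lra.
have r01 : 0 < r < 1 by rewrite r0 r1.
have := weighted_AMGM_powR r t s r01 t0 (ltW s0).
have sr0 : 0 < s `^ (r - 1) by rewrite powR_gt0.
have P : s `^ (1 - r) * s `^ (r - 1) = 1.
  by rewrite -[r - 1]opprB powRN mulfV // gt_eqF // powR_gt0.
rewrite -(ler_pM2r sr0) -(mulrA (t `^ r)) P mulr1 => /le_trans; apply.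
have ss : s * s `^ (r - 1) = s `^ r by rewrite mulr_powRB1 ?ltW.
by rewrite -ss; lra.
Qed.

Lemma convex_powR_tangent r s t : 1 <= r -> 0 < s -> 0 <= t ->
  s `^ r + r * s `^ (r - 1) * (t - s) <= t `^ r.
Proof.
move=> r1 s0 t0; have r0 : 0 < r by apply: lt_le_trans r1.
have ri : 0 < r^-1 <= 1 by rewrite invr_gt0 r0 invf_le1.
have := concave_powR_tangent r^-1 (s `^ r) (t `^ r) ri (powR_gt0 r s0) (powR_ge0 t r).
rewrite -!powRrM !mulfV ?gt_eqF // (powRr1 t0) (powRr1 (ltW s0)).
have -> : r * (r^-1 - 1) = 1 - r by rewrite mulrBr mulfV ?gt_eqF // mulr1.
have P : s `^ (1 - r) * s `^ (r - 1) = 1.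
  by rewrite -[r - 1]opprB powRN mulfV // gt_eqF // powR_gt0.
have sr0 : 0 < s `^ (r - 1) by rewrite powR_gt0.
rewrite -subr_ge0 -(pmulr_rge0 _ (mulr_gt0 r0 sr0)) => h.
have -> : r * s `^ (r - 1) * (t - s) =
  r * s `^ (r - 1) * (t - s - (r^-1 * s `^ (1 - r) * (t `^ r - s `^ r)))
  + (r * r^-1) * (s `^ (1 - r) * s `^ (r - 1)) * (t `^ r - s `^ r) by ring.
by rewrite P mulfV ?gt_eqF // !mul1r; lra.
Qed.

Lemma ler_powR_npos e s t : e <= 0 -> 0 < s -> s <= t -> t `^ e <= s `^ e.
Proof.
move=> e0 s0 st; have t0 : 0 < t by apply: lt_le_trans st.
have : s `^ (- e) <= t `^ (- e).
  by apply: ge0_ler_powR; rewrite ?nnegrE ?oppr_ge0 // ltW.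
by rewrite !powRN lef_pV2 // posrE powR_gt0.
Qed.
End power_tangents.

Section finite_sums.
Context {R : realType} {I : finType}.
Implicit Types (f g m b : I -> R).

Lemma CauchySchwarz_sum f g :
  (\sum_i f i * g i) ^+ 2 <= (\sum_i f i ^+ 2) * (\sum_i g i ^+ 2).
Proof.
set A := \sum_i f i ^+ 2; set B := \sum_i f i * g i; set C := \sum_i g i ^+ 2.
have C0 : 0 <= C by apply: sumr_ge0 => i _; exact: sqr_ge0.
have [C_eq0|C_neq0] := eqVneq C 0.
  have g0 i : g i = 0.
    apply/eqP; rewrite -sqrf_eq0; apply/eqP.
    by apply: (psumr_eq0P _ C_eq0) => // k _; exact: sqr_ge0.
  have -> : B = 0 by rewrite /B big1 // => i _; rewrite g0 mulr0.
  by rewrite C_eq0 mulr0 expr0n.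
have : 0 <= \sum_i (C * f i - B * g i) ^+ 2 by apply: sumr_ge0 => i _; exact: sqr_ge0.
have -> : \sum_i (C * f i - B * g i) ^+ 2 = C * (A * C - B ^+ 2).
  rewrite (eq_bigr (fun i => C ^+ 2 * f i ^+ 2 - 2 * C * B * (f i * g i) + B ^+ 2 * g i ^+ 2));
    last by move=> i _; ring.
  by rewrite big_split /= sumrB -!mulr_sumr -/A -/B -/C; ring.
by rewrite pmulr_rge0 ?lt0r ?C_neq0 // subr_ge0 mulrC.
Qed.

Lemma ler_sum_term (i : I) f : (forall i, 0 <= f i) -> f i <= \sum_i f i.
Proof. by move=> f0; rewrite (bigD1 i) //= lerDl sumr_ge0. Qed.

Lemma sumr_gt0 (i0 : I) f : (forall i, 0 < f i) -> 0 < \sum_i f i.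
Proof.
by move=> f0; apply: lt_le_trans (f0 i0) (ler_sum_term _ _ (fun i => ltW (f0 i))).
Qed.

Lemma weighted_sqr_center m b y : \sum_i m i != 0 ->
  \sum_i m i * (y - b i) ^+ 2 = \sum_i m i * ((\sum_i m i)^-1 * \sum_i m i * b i - b i) ^+ 2
    + (\sum_i m i) * (y - (\sum_i m i)^-1 * \sum_i m i * b i) ^+ 2.
Proof.
set M := \sum_i m i; set c := M^-1 * _ => M0.
have Mc : \sum_i m i * b i = M * c by rewrite /c mulVKf.
have expand z : \sum_i m i * (z - b i) ^+ 2
    = M * z ^+ 2 - 2 * z * \sum_i m i * b i + \sum_i m i * b i ^+ 2.
  rewrite /M mulr_suml mulr_sumr -sumrB -big_split /=.
  by apply: eq_bigr => i _; ring.
rewrite !expand Mc; ring.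
Qed.
End finite_sums.

Section row_dot_product.
Context {R : realType} {d : nat}.
Implicit Types (u v w y : 'rV[R]_d) (t : R).

Definition dotr u v : R := \sum_i u ord0 i * v ord0 i.

Lemma dotrC u v : dotr u v = dotr v u.
Proof. by apply: eq_bigr => i _; rewrite mulrC. Qed.

Lemma dotrDl u v w : dotr (u + v) w = dotr u w + dotr v w.
Proof. by rewrite /dotr -big_split; apply: eq_bigr => i _; rewrite !mxE mulrDl. Qed.

Lemma dotrNl u v : dotr (- u) v = - dotr u v.
Proof. by rewrite /dotr -sumrN; apply: eq_bigr => i _; rewrite !mxE mulNr. Qed.

Lemma dotrZl t u v : dotr (t *: u) v = t * dotr u v.
Proof. by rewrite /dotr mulr_sumr; apply: eq_bigr => i _; rewrite !mxE mulrA. Qed.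

Lemma dotrDr u v w : dotr u (v + w) = dotr u v + dotr u w.
Proof. by rewrite dotrC dotrDl !(dotrC _ u). Qed.

Lemma dotrNr u v : dotr u (- v) = - dotr u v.
Proof. by rewrite dotrC dotrNl dotrC. Qed.

Lemma dotrZr t u v : dotr u (t *: v) = t * dotr u v.
Proof. by rewrite dotrC dotrZl dotrC. Qed.

Lemma dotrr_ge0 u : 0 <= dotr u u.
Proof. by apply: sumr_ge0 => i _; rewrite -expr2 sqr_ge0. Qed.

Lemma enorm_sqr u : enorm u ^+ 2 = dotr u u.
Proof.
rewrite /enorm sqr_sqrtr; last by apply: sumr_ge0 => i _; exact: sqr_ge0.
by apply: eq_bigr => i _; rewrite expr2.
Qed.

Lemma CauchySchwarz_dotr u v : dotr u v ^+ 2 <= dotr u u * dotr v v.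
Proof.
have sqr_sum (f : 'I_d -> R) : \sum_i f i * f i = \sum_i f i ^+ 2.
  by apply: eq_bigr => i _; rewrite expr2.
rewrite /dotr (sqr_sum (fun i => u ord0 i)) (sqr_sum (fun i => v ord0 i)).
exact: CauchySchwarz_sum.
Qed.

Lemma dotr_sqrDZ u w t :
  dotr (u + t *: w) (u + t *: w) = dotr u u + 2 * t * dotr u w + t ^+ 2 * dotr w w.
Proof. by rewrite !(dotrDl, dotrDr, dotrZl, dotrZr) (dotrC w u); ring. Qed.

Lemma dotr_sqrB u v : dotr (v - u) (v - u) = dotr u u + dotr v v - 2 * dotr u v.
Proof. by rewrite !(dotrDl, dotrDr, dotrNl, dotrNr) (dotrC v u); ring. Qed.

Definition wmean {I : finType} (m : I -> R) (b : I -> 'rV[R]_d) : 'rV[R]_d :=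
  (\sum_i m i)^-1 *: \sum_i m i *: b i.

Lemma wmean_dotr_le {I : finType} (m : I -> R) (b : I -> 'rV[R]_d) y :
  0 < \sum_i m i ->
  \sum_i m i * dotr (wmean m b - b i) (wmean m b - b i)
    <= \sum_i m i * dotr (y - b i) (y - b i).
Proof.
move=> M0; rewrite /dotr.
under eq_bigr do rewrite mulr_sumr; under [X in _ <= X]eq_bigr do rewrite mulr_sumr.
rewrite exchange_big [X in _ <= X]exchange_big /=; apply: ler_sum => k _.
under eq_bigr do rewrite !mxE -expr2; under [X in _ <= X]eq_bigr do rewrite !mxE -expr2.
have -> : (\sum_i m i *: b i) ord0 k = \sum_i m i * b i ord0 k.
  by rewrite summxE; apply: eq_bigr => i _; rewrite mxE.
rewrite [X in _ <= X](weighted_sqr_center _ _ _ (lt0r_neq0 M0)) lerDl.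
by rewrite mulr_ge0 ?sqr_ge0 ?ltW.
Qed.
End row_dot_product.

Section regularized_norm_power.
Context {R : realType}.

Lemma regularized_CauchySchwarz_gap (P B nu nv eps : R) :
  0 <= P -> P ^+ 2 = (nu + eps) * (nv + eps) -> 0 <= eps ->
  B ^+ 2 <= nu * nv -> 0 <= nu + nv - 2 * B ->
  B + eps <= P /\ eps * (nu + nv - 2 * B) <= 2 * P * (P - B - eps).
Proof.
move=> P0 hP eps0 CS D0.
have gap : eps * (nu + nv - 2 * B) <= P ^+ 2 - (B + eps) ^+ 2.
  have -> : P ^+ 2 - (B + eps) ^+ 2 = nu * nv - B ^+ 2 + eps * (nu + nv - 2 * B).
    by rewrite hP; ring.
  lra.
have epsD0 : 0 <= eps * (nu + nv - 2 * B) by rewrite mulr_ge0.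
have BP : B + eps <= P by nra.
split=> //; apply: (le_trans gap).
have -> : P ^+ 2 - (B + eps) ^+ 2 = (P - B - eps) * (P + (B + eps)) by ring.
nra.
Qed.

Lemma sqrtr_powR2 (x q : R) : 0 <= x -> Num.sqrt x `^ (2 * q) = x `^ q.
Proof.
by move=> x0; rewrite -powR12_sqrt // -powRrM mulrA mulVf ?pnatr_eq0 // mul1r.
Qed.

Lemma powR_sqrt_tangent (q x y : R) : 2^-1 <= q -> 0 < x -> 0 <= y ->
  x `^ q + 2 * q * x `^ (q - 1) * (Num.sqrt x * Num.sqrt y - x) <= y `^ q.
Proof.
move=> q12 x0 y0; have q0 : 0 < q by apply: lt_le_trans q12; rewrite invr_gt0.
set g := Num.sqrt x; have g0 : 0 < g by rewrite sqrtr_gt0.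
have g2 : g ^+ 2 = x by rewrite sqr_sqrtr // ltW.
have gq : g `^ (2 * q - 1) = x `^ (q - 1) * g.
  apply: (mulfI (lt0r_neq0 g0)); rewrite mulr_powRB1 ?ltW ?mulr_gt0 //.
  rewrite [RHS]mulrCA -expr2 g2 [RHS]mulrC mulr_powRB1 ?(ltW x0) //.
  by rewrite /g sqrtr_powR2 // ltW.
have := convex_powR_tangent (2 * q) g (Num.sqrt y) ltac:(lra) g0 (sqrtr_ge0 y).
rewrite (sqrtr_powR2 _ _ (ltW x0)) (sqrtr_powR2 _ _ y0) gq.
have -> : 2 * q * (x `^ (q - 1) * g) * (Num.sqrt y - g)
    = 2 * q * x `^ (q - 1) * (g * Num.sqrt y - g ^+ 2) by ring.
by rewrite g2.
Qed.

(* nu, nv and B stand for ||u||^2, ||v||^2 and <u, v>; the last term of the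
   left-hand side is the strong-convexity gain q eps K^(q-2) ||v - u||^2. *)
Lemma regularized_norm_powR_minorant (nu nv B eps K q : R) :
  0 < eps -> 2^-1 <= q <= 1 -> 0 <= nu -> 0 <= nv ->
  B ^+ 2 <= nu * nv -> 0 <= nu + nv - 2 * B -> nu + eps <= K -> nv + eps <= K ->
  (nu + eps) `^ q + 2 * q * (nu + eps) `^ (q - 1) * (B - nu)
    + q * eps * K `^ (q - 1) / K * (nu + nv - 2 * B) <= (nv + eps) `^ q.
Proof.
move=> eps0 /andP[q12 q1] nu0 nv0 CS D0 nuK nvK.
have q0 : 0 < q by apply: lt_le_trans q12; rewrite invr_gt0.
have K0 : 0 < K by lra.
set P := Num.sqrt (nu + eps) * Num.sqrt (nv + eps).
have P0 : 0 <= P by rewrite mulr_ge0 ?sqrtr_ge0.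
have P2 : P ^+ 2 = (nu + eps) * (nv + eps) by rewrite exprMn !sqr_sqrtr //; lra.
set al := (nu + eps) `^ (q - 1); set be := K `^ (q - 1).
set E := P - B - eps; set D := nu + nv - 2 * B.
have [BP gap] := regularized_CauchySchwarz_gap _ _ _ _ _ P0 P2 (ltW eps0) CS D0.
have PK : P <= K.
  have : P ^+ 2 <= K ^+ 2 by rewrite P2; nra.
  nra.
have E0 : 0 <= E by rewrite /E; lra.
have alE : be * E <= al * E by apply: (ler_wpM2r E0); apply: ler_powR_npos => //; lra.
have epsD : eps * D <= 2 * K * E.
  apply: (le_trans gap); rewrite -!(mulrA 2); apply: ler_wpM2l => //.
  exact: (ler_wpM2r E0 PK).
have cD : q * eps * be / K * D <= 2 * q * (al * E).
  have -> : q * eps * be / K * D = q * be * (eps * D) / K by ring.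
  have qbe0 : 0 <= q * be by rewrite mulr_ge0 ?powR_ge0 ?ltW.
  rewrite ler_pdivrMr //; apply: (le_trans (ler_wpM2l qbe0 epsD)).
  have -> : q * be * (2 * K * E) = 2 * q * (be * E) * K by ring.
  apply: (ler_wpM2r (ltW K0)).
  by apply: ler_wpM2l alE; rewrite mulr_ge0 // ltW.
have := powR_sqrt_tangent q (nu + eps) (nv + eps) q12 ltac:(lra) ltac:(lra).
rewrite -/P -/al; have -> : P - (nu + eps) = B - nu + E by rewrite /E; ring.
lra.
Qed.
End regularized_norm_power.

Section irls.
Context {R : realType} {d n : nat} {a : 'I_n -> 'rV[R]_d} {w : 'I_n -> R} {eps p : R}.
Hypotheses (w_gt0 : forall j, 0 < w j) (eps_gt0 : 0 < eps).
Hypotheses (p_ge1 : 1 <= p) (p_le2 : p <= 2) (n_gt0 : (0 < n)%N).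

Local Notation q := (p / 2).
Local Notation Phi := (Phi a w eps p).
Local Notation mu := (mu a w eps p).
Local Notation step := (irls_step a w eps p).

Definition reg_sqdist (x : 'rV[R]_d) j := dotr (x - a j) (x - a j) + eps.

Lemma PhiE x : Phi x = \sum_j w j * reg_sqdist x j `^ q.
Proof. by apply: eq_bigr => j _; rewrite enorm_sqr. Qed.

Lemma muE x j : mu x j = w j * reg_sqdist x j `^ (q - 1).
Proof. by rewrite /mu enorm_sqr. Qed.

Lemma reg_sqdist_ge_eps x j : eps <= reg_sqdist x j.
Proof. by rewrite lerDr dotrr_ge0. Qed.

Lemma reg_sqdist_gt0 x j : 0 < reg_sqdist x j.
Proof. exact: lt_le_trans eps_gt0 (reg_sqdist_ge_eps x j). Qed.

Lemma mu_gt0 x j : 0 < mu x j.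
Proof. by rewrite muE mulr_gt0 ?powR_gt0 ?reg_sqdist_gt0. Qed.

Lemma half_p_bounds : 2^-1 <= q <= 1.
Proof.
by apply/andP; split; [rewrite ler_pdivlMr // mulVf | rewrite ler_pdivrMr // mul1r].
Qed.

Lemma half_p_gt0 : 0 < q.
Proof. by rewrite divr_gt0 // (lt_le_trans ltr01 p_ge1). Qed.

Lemma Phi_le_linearization x y :
  Phi y <= Phi x + q * \sum_j mu x j * (reg_sqdist y j - reg_sqdist x j).
Proof.
rewrite !PhiE mulr_sumr -big_split /=; apply: ler_sum => j _.
have q01 : 0 < q <= 1 by rewrite half_p_gt0; case/andP: half_p_bounds.
set s := reg_sqdist x j; set t := reg_sqdist y j.
have -> : w j * s `^ q + q * (mu x j * (t - s))
    = w j * (s `^ q + q * s `^ (q - 1) * (t - s)) by rewrite muE; ring.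
rewrite ler_pM2l //.
exact: concave_powR_tangent _ _ _ q01 (reg_sqdist_gt0 x j) (ltW (reg_sqdist_gt0 y j)).
Qed.

Lemma irls_step_min x y :
  \sum_j mu x j * reg_sqdist (step x) j <= \sum_j mu x j * reg_sqdist y j.
Proof.
rewrite /reg_sqdist; under eq_bigr do rewrite mulrDr.
under [X in _ <= X]eq_bigr do rewrite mulrDr.
rewrite !big_split /= lerD2r; apply: wmean_dotr_le.
exact: sumr_gt0 (Ordinal n_gt0) _ (mu_gt0 x).
Qed.

Lemma reg_sqdist_segment x z t j :
  reg_sqdist (x + t *: (z - x)) j - reg_sqdist x j
    = 2 * t * dotr (x - a j) (z - x) + t ^+ 2 * dotr (z - x) (z - x).
Proof.
rewrite /reg_sqdist.
have -> : x + t *: (z - x) - a j = x - a j + t *: (z - x) by rewrite addrAC.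
by rewrite dotr_sqrDZ; ring.
Qed.

Lemma Phi_irls_step_le x z t :
  Phi (step x) <= Phi x + q * (2 * t * \sum_j mu x j * dotr (x - a j) (z - x)
                              + t ^+ 2 * (\sum_j mu x j) * dotr (z - x) (z - x)).
Proof.
apply: (le_trans (Phi_le_linearization x (step x))).
rewrite lerD2l ler_pM2l ?half_p_gt0 //.
have -> : 2 * t * \sum_j mu x j * dotr (x - a j) (z - x)
    + t ^+ 2 * (\sum_j mu x j) * dotr (z - x) (z - x)
    = \sum_j mu x j * (reg_sqdist (x + t *: (z - x)) j - reg_sqdist x j).
  rewrite [X in X + _]mulr_sumr [t ^+ 2 * _]mulr_sumr mulr_suml -big_split /=.
  by apply: eq_bigr => j _; rewrite reg_sqdist_segment; ring.
under eq_bigr do rewrite mulrBr; under [X in _ <= X]eq_bigr do rewrite mulrBr.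
by rewrite !sumrB lerD2r irls_step_min.
Qed.

Lemma Phi_irls_step_le_Phi x : Phi (step x) <= Phi x.
Proof.
by have := Phi_irls_step_le x x 0; rewrite !mulr0 expr0n /= !mul0r addr0 mulr0 addr0.
Qed.

Lemma Phi_irls_iter_le x0 t : Phi (irls_iter a w eps p x0 t) <= Phi x0.
Proof.
elim: t => [|t IH]; first exact: lexx.
exact: le_trans (Phi_irls_step_le_Phi (irls_iter a w eps p x0 t)) IH.
Qed.

Definition sc_modulus K := q * eps * K `^ (q - 1) / K.

Lemma Phi_quadratic_minorant x z K :
  (forall j, reg_sqdist x j <= K) -> (forall j, reg_sqdist z j <= K) ->
  Phi x + 2 * q * \sum_j mu x j * dotr (x - a j) (z - x)
    + sc_modulus K * (\sum_j w j) * dotr (z - x) (z - x) <= Phi z.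
Proof.
move=> xK zK; rewrite !PhiE [2 * q * _]mulr_sumr [sc_modulus K * _]mulr_sumr mulr_suml.
rewrite -!big_split /=; apply: ler_sum => j _.
set u := x - a j; set v := z - a j.
have -> : z - x = v - u by rewrite /u /v opprB addrA subrK.
have D0 : 0 <= dotr u u + dotr v v - 2 * dotr u v by rewrite -dotr_sqrB dotrr_ge0.
have := regularized_norm_powR_minorant _ _ _ _ _ _ eps_gt0 half_p_bounds
  (dotrr_ge0 u) (dotrr_ge0 v) (CauchySchwarz_dotr u v) D0 (xK j) (zK j).
rewrite /reg_sqdist -/u -/v => /(ler_wpM2l (ltW (w_gt0 j))).
by rewrite muE /reg_sqdist -/u dotrDr dotrNr dotr_sqrB /sc_modulus; lra.
Qed.

Definition irls_rate K := 1 - sc_modulus K / (sc_modulus K + q * eps `^ (q - 1)).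

Lemma sc_modulus_gt0 K : 0 < K -> 0 < sc_modulus K.
Proof.
move=> K0; have num0 := mulr_gt0 (mulr_gt0 half_p_gt0 eps_gt0) (powR_gt0 (q - 1) K0).
exact: divr_gt0 num0 K0.
Qed.

Lemma irls_rate_lt1 K : 0 < K -> irls_rate K < 1.
Proof.
move=> K0; have c0 := sc_modulus_gt0 K K0.
have m0 : 0 < q * eps `^ (q - 1) := mulr_gt0 half_p_gt0 (powR_gt0 (q - 1) eps_gt0).
by rewrite gtrBl divr_gt0 ?addr_gt0.
Qed.

Lemma sum_mu_le x : \sum_j mu x j <= eps `^ (q - 1) * \sum_j w j.
Proof.
rewrite mulr_sumr; apply: ler_sum => j _; rewrite muE mulrC.
apply: (ler_wpM2r (ltW (w_gt0 j))).
apply: ler_powR_npos => //; last exact: reg_sqdist_ge_eps.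
by rewrite subr_le0; case/andP: half_p_bounds.
Qed.

Lemma Phi_irls_step_contraction x z K : 0 < K ->
  (forall j, reg_sqdist x j <= K) -> (forall j, reg_sqdist z j <= K) ->
  Phi (step x) - Phi z <= irls_rate K * (Phi x - Phi z).
Proof.
move=> K0 xK zK; rewrite /irls_rate.
set c := sc_modulus K; set m := q * eps `^ (q - 1); set th := c / (c + m).
have c0 : 0 < c := sc_modulus_gt0 K K0.
have m0 : 0 < m := mulr_gt0 half_p_gt0 (powR_gt0 (q - 1) eps_gt0).
have th0 : 0 <= th by rewrite divr_ge0 ?addr_ge0 ?ltW.
have maj := Phi_irls_step_le x z th.
have minor := Phi_quadratic_minorant x z K xK zK; rewrite -/c in minor.
set G := \sum_j mu x j * _ in maj minor; set M := \sum_j mu x j in maj.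
set D := dotr (z - x) (z - x) in maj minor; set W := \sum_j w j in minor.
have D0 : 0 <= D := dotrr_ge0 _.
have W0 : 0 < W := sumr_gt0 (Ordinal n_gt0) _ w_gt0.
have thM : q * th * M <= c * W.
  have qth0 : 0 <= q * th := mulr_ge0 (ltW half_p_gt0) th0.
  apply: (le_trans (ler_wpM2l qth0 (sum_mu_le x))).
  have -> : q * th * (eps `^ (q - 1) * W) = c * W * (m / (c + m)) by rewrite /th /m; ring.
  by rewrite ger_pMr ?(mulr_gt0 c0 W0) // ler_pdivrMr ?addr_gt0 // mul1r lerDr ltW.
have h1 := ler_wpM2l (mulr_ge0 th0 D0) thM.
have h2 := ler_wpM2l th0 minor.
have splitq : q * (2 * th * G + th ^+ 2 * M * D) = th * (2 * q * G) + th * D * (q * th * M).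
  by ring.
rewrite splitq in maj; move: maj h2.
move: (Phi (step x)) (Phi x) (Phi z) => Pstep Px Pz; clearbody th c m G M D W; lra.
Qed.

Lemma reg_sqdist_le_sublevel L x j : Phi x <= L -> reg_sqdist x j <= (L / w j) `^ q^-1.
Proof.
move=> xL; have S0 := reg_sqdist_gt0 x j.
have Sq : reg_sqdist x j `^ q <= L / w j.
  rewrite ler_pdivlMr // mulrC; apply: le_trans xL; rewrite PhiE.
  by apply: ler_sum_term => k; rewrite mulr_ge0 ?powR_ge0 ?ltW.
have -> : reg_sqdist x j = (reg_sqdist x j `^ q) `^ q^-1.
  by rewrite -powRrM mulfV ?powRr1 ?ltW // lt0r_neq0 ?half_p_gt0.
apply: ge0_ler_powR => //; rewrite ?invr_ge0 ?ltW ?half_p_gt0 ?nnegrE ?powR_ge0 //.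
exact: le_trans (powR_ge0 _ _) Sq.
Qed.
End irls.

Arguments reg_sqdist {R d n} a eps x j.
Arguments irls_rate {R} eps p K.

Theorem proposition6 (R : realType) (d n : nat) (hd : (1 <= d)%N) (hn : (1 <= n)%N)
  (a : 'I_n -> 'rV[R]_d) (w : 'I_n -> R) (hw : forall j, 0 < w j)
  (eps p : R) (heps : 0 < eps) (hp1 : 1 <= p) (hp2 : p <= 2)
  (xstar : 'rV[R]_d)
  (hmin : forall x : 'rV[R]_d, Phi a w eps p xstar <= Phi a w eps p x)
  (huniq : forall x : 'rV[R]_d,
     (forall y : 'rV[R]_d, Phi a w eps p x <= Phi a w eps p y) -> x = xstar)
  (x0 : 'rV[R]_d) :
  exists nu : R, nu < 1 /\ exists T : nat, forall t : nat, (T <= t)%N ->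
    Phi a w eps p (irls_iter a w eps p x0 t.+1) - Phi a w eps p xstar
    <= nu * (Phi a w eps p (irls_iter a w eps p x0 t) - Phi a w eps p xstar).
Proof.
(* The contraction holds from t = 0 on. *)
set K := \sum_k (Phi a w eps p x0 / w k) `^ (p / 2)^-1.
have K_bound x j : Phi a w eps p x <= Phi a w eps p x0 -> reg_sqdist a eps x j <= K.
  move=> /(reg_sqdist_le_sublevel hw heps hp1 _ _ j) /le_trans; apply.
  exact: (ler_sum_term j (fun k => _ `^ _)) (fun k => powR_ge0 _ _).
have K0 : 0 < K.
  exact: lt_le_trans (reg_sqdist_gt0 heps x0 (Ordinal hn)) (K_bound _ _ (lexx _)).
exists (irls_rate eps p K); split; first exact: irls_rate_lt1.
exists 0%N => t _; apply: Phi_irls_step_contraction => // j; apply: K_bound.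
  exact: Phi_irls_iter_le.
exact: hmin.
Qed.
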